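(* Let $(\mathbb S,+,\cdot)$ be an S-Ring with Base Unit $A$, and let $m\in\mathbb S_0$ and $s\in\mathbb S$. Then there exist $x,y\in\mathbb S_0$ with $s=x-1+y\cdot A$, and for such $x,y$ one has $m\cdot s=m\cdot(x-y)+y-1+(m\cdot y)\cdot A$.
   Context: An S-Structure is a triple $(\mathbb S,+,\cdot)$ where $\mathbb S$ is a set and $+,\cdot$ are binary operations on $\mathbb S$ such that: $(\mathbb S,+)$ is a commutative group with identity $0$ (the inverse of $s$ is written $-s$, and $s-t:=s+(-t)$); $\mathbb S$ is closed under $\cdot$; and there exists $s\in\mathbb S$ with $0\cdot s\neq 0$ or $s\cdot 0\neq 0$. Multiplication binds tighter than addition. The structures considered come with a distinguished element of $\mathbb S$ denoted $1$. It is Commutative if $s\cdot t=t\cdot s$ for all $s,t$. For a Commutative S-Structure and $\alpha\in\mathbb S$, put $\mathbb S_\alpha=\{s\in\mathbb S:0\cdot s=s\cdot 0=\alpha\}$ and $\Lambda=\{\alpha\in\mathbb S:\mathbb S_\alpha\neq\emptyset\}$. Wheel Distributive: $s\cdot(t+r)+(s\cdot 0)=(s\cdot t)+(s\cdot r)$ for all $s,t,r\in\mathbb S$. S-Associative: for all $m,n\in\mathbb S_0$ and $s\in\mathbb S$, $m\cdot(n\cdot s)=(m\cdot n)\cdot s-([(m-1)\cdot(n-1)]\cdot(0\cdot s))$. Base: if $\mathbb S_0\neq\emptyset$ and $\alpha\in\Lambda$, $q\in\mathbb S_\alpha$ is a Base for $\mathbb S_\alpha$ if $q+\beta\in\mathbb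 S_\alpha$ for all $\beta\in\mathbb S_0$ and every $s\in\mathbb S_\alpha$ equals $q+\beta$ for some $\beta\in\mathbb S_0$. Coordinated: $\mathbb S_0\neq\emptyset$ and every $\mathbb S_\alpha$ with $\alpha\in\Lambda$ has a Base. Standard Bases: a Coordinated Commutative S-Structure has Standard Bases if there is a specified element $q_0(1)\in\mathbb S_1$ which is a Base for $\mathbb S_1$, and for every $\alpha\in\Lambda$ the element $q_0(\alpha):=\alpha\cdot(q_0(1)+1)-1$ lies in $\mathbb S_\alpha$ and is a Base for $\mathbb S_\alpha$. The Base Unit is $A:=q_0(1)+1$. An Essential S-Structure is an S-Structure that is Commutative, Wheel Distributive, S-Associative, has Standard Bases (in particular is Coordinated), satisfies $0,1\in\mathbb S_0$, and satisfies $\mathbb S_0=\{1\cdot x:x\in\mathbb S_0\}$. A Unity is an element $e\in\Lambda$ with $e\cdot s=s\cdot e=s$ for all $s\in\mathbb S$. An S-Ring is an Essential S-Structure which has a Unity. *)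

(* the additive commutative group (S,+) is a zmodType;
   the multiplication is an arbitrary binary operation, 1 a distinguished
   element, and q01 the specified Base q_0(1) of S_1 (Standard Bases). *)
From mathcomp Require Import all_boot all_algebra.
Set Implicit Arguments. Unset Strict Implicit. Unset Printing Implicit Defensive.
Import GRing.Theory.
Local Open Scope ring_scope.

Section SStructures.
Variables (T : zmodType) (mul : T -> T -> T) (one : T) (q01 : T).

(* S-Structure axiom: some s with 0*s <> 0 or s*0 <> 0 (closure is by typing) *)
Definition is_SStructure : Prop :=
  exists s, mul 0 s <> 0 \/ mul s 0 <> 0.

Definition Commutative : Prop := forall s t, mul s t = mul t s.

Definition Sa (alpha s : T) : Prop := mul 0 s = alpha /\ mul s 0 = alpha.

Definition Lam (alpha : T) : Prop := exists s, Sa alpha s.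

Definition WheelDistributive : Prop :=
  forall s t r, mul s (t + r) + mul s 0 = mul s t + mul s r.

Definition SAssociative : Prop :=
  forall m n s, Sa 0 m -> Sa 0 n ->
    mul m (mul n s) = mul (mul m n) s - mul (mul (m - one) (n - one)) (mul 0 s).

Definition is_Base (alpha q : T) : Prop :=
  Sa alpha q /\
  (forall b, Sa 0 b -> Sa alpha (q + b)) /\
  (forall s, Sa alpha s -> exists b, Sa 0 b /\ s = q + b).

Definition Coordinated : Prop :=
  (exists s, Sa 0 s) /\ (forall alpha, Lam alpha -> exists q, is_Base alpha q).

Definition q0 (alpha : T) : T := mul alpha (q01 + one) - one.

Definition StandardBases : Prop :=
  Coordinated /\ is_Base one q01 /\
  (forall alpha, Lam alpha -> is_Base alpha (q0 alpha)).

Definition BaseUnit : T := q01 + one.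

Definition Essential : Prop :=
  is_SStructure /\ Commutative /\ WheelDistributive /\ SAssociative /\
  StandardBases /\ Sa 0 0 /\ Sa 0 one /\
  (forall z, Sa 0 z <-> exists x, Sa 0 x /\ z = mul one x).

Definition is_Unity (e : T) : Prop :=
  Lam e /\ forall s, mul e s = s /\ mul s e = s.

Definition SRing : Prop := Essential /\ exists e, is_Unity e.

End SStructures.

(* S-Associativity with first factor 0 forces 1 * 1 = 1, identifies the Unity
   with 1 and gives 0 * (0 * s) = 0.  Hence s lies in S_a with a = 0 * s in S_0,
   and the Standard Base q_0(a) = a * A - 1 of S_a yields the coordinates x, y.
   Multiplication by m in S_0 is additive (Wheel Distributivity with m * 0 = 0);
   expanding m * (y * A) by S-Associativity leaves the correction term
   ((m - 1) * (y - 1)) * (0 * A), which is linear in m * y, m, y because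
   0 * A = 1. *)
From mathcomp Require Import all_boot all_algebra.
Set Implicit Arguments. Unset Strict Implicit. Unset Printing Implicit Defensive.
Import GRing.Theory.
Local Open Scope ring_scope.

Section SRingArithmetic.
Variables (T : zmodType) (mul : T -> T -> T) (one q01 : T).
Hypothesis mulDr_wheel : WheelDistributive mul.

Lemma mulDr_ann (a t r : T) : mul a 0 = 0 -> mul a (t + r) = mul a t + mul a r.
Proof. by move=> a0; rewrite -mulDr_wheel a0 addr0. Qed.

Lemma mulNr_ann (a t : T) : mul a 0 = 0 -> mul a (- t) = - mul a t.
Proof.
by move=> a0; apply/eqP; rewrite -subr_eq0 opprK -mulDr_ann // addNr a0.
Qed.

Lemma mulBr_ann (a t r : T) : mul a 0 = 0 -> mul a (t - r) = mul a t - mul a r.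
Proof. by move=> a0; rewrite mulDr_ann // mulNr_ann. Qed.

Hypotheses (mulC : Commutative mul) (mulA_S : SAssociative mul one).
Hypotheses (S0_0 : Sa mul 0 0) (S0_1 : Sa mul 0 one).

Local Notation A := (BaseUnit one q01).

Lemma mulNr_S0 (a t : T) : Sa mul 0 a -> mul a (- t) = - mul a t.
Proof. by case=> _; apply: mulNr_ann. Qed.

Lemma mulBr_S0 (a t r : T) : Sa mul 0 a -> mul a (t - r) = mul a t - mul a r.
Proof. by case=> _; apply: mulBr_ann. Qed.

Lemma mulN1_ann : mul (- one) 0 = 0.
Proof. by rewrite mulC mulNr_ann ?S0_0.2 // S0_1.1 oppr0. Qed.

Variable e : T.
Hypothesis unity_e : is_Unity mul e.

Let mule s : mul e s = s. Proof. by case: unity_e => _ /(_ s) []. Qed.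
Let mulse s : mul s e = s. Proof. by case: unity_e => _ /(_ s) []. Qed.

Lemma mul_one_one : mul one one = one.
Proof.
have [t [t0 _]] := unity_e.1.
have e_S0 : Sa mul 0 e by split; [rewrite mulse | rewrite mulC mulse].
have : mul (- one) (e - one) = 0.
  have := mulA_S t S0_0 e_S0.
  by rewrite mule (mulse 0) t0 mulse sub0r -{1}[e]subr0 => /addrI /oppr_inj <-.
rewrite mulBr_ann ?mulN1_ann // mulse mulC mulNr_S0 // opprK.
by move/eqP; rewrite addrC subr_eq0 => /eqP.
Qed.

Lemma unity_eq_one : e = one.
Proof.
have [t [t0 _]] := unity_e.1.
have := mulA_S t S0_0 S0_0.
rewrite t0 (mulse 0) S0_0.1 t0 mulse sub0r mulNr_ann ?mulN1_ann //.
rewrite mulC mulNr_S0 // opprK mul_one_one.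
by move/eqP; rewrite eq_sym subr_eq0 => /eqP.
Qed.

Lemma mul1s s : mul one s = s.
Proof. by rewrite -unity_eq_one mule. Qed.

Lemma muls1 s : mul s one = s.
Proof. by rewrite mulC mul1s. Qed.

Lemma S0_mul0 s : Sa mul 0 (mul 0 s).
Proof.
have ann : mul 0 (mul 0 s) = 0.
  have := mulA_S s S0_0 S0_0.
  rewrite S0_0.1 sub0r mulNr_ann ?mulN1_ann // (mulC (- one)) mulNr_S0 // opprK.
  by rewrite mul_one_one mul1s subrr.
by split; rewrite // mulC.
Qed.

Lemma mul0_BaseUnit : Sa mul one q01 -> mul 0 A = one.
Proof.
by case=> q01_1 _; rewrite mulDr_ann ?S0_0.2 // q01_1 S0_1.1 addr0.
Qed.

Lemma S0_coordinates s :
  (forall alpha, Lam mul alpha -> is_Base mul alpha (q0 mul one q01 alpha)) ->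
  exists x y, Sa mul 0 x /\ Sa mul 0 y /\ s = x - one + mul y A.
Proof.
move=> bases; set a := mul 0 s.
have s_a : Sa mul a s by split; rewrite // mulC.
have [_ [_ coord]] := bases a (ex_intro _ s s_a).
have [x [x0 ->]] := coord s s_a.
exists x, a; split=> //; split; first exact: S0_mul0.
by rewrite /q0 addrC addrA addrAC.
Qed.

Lemma mul_subr1_S0 m y : Sa mul 0 m -> Sa mul 0 y ->
  mul (m - one) (y - one) = mul m y - y - (m - one).
Proof.
move=> m0 y0; have m1_ann : mul (m - one) 0 = 0.
  by rewrite mulC mulBr_ann ?S0_0.2 // m0.1 S0_1.1 subr0.
by rewrite mulBr_ann // muls1 mulC mulBr_S0 // muls1 mulC.
Qed.

Lemma mul_S0_coordinates m x y : Sa mul one q01 -> Sa mul 0 m -> Sa mul 0 y ->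
  mul m (x - one + mul y A) = mul m (x - y) + y - one + mul (mul m y) A.
Proof.
move=> q01_1 m0 y0.
rewrite mulDr_ann ?m0.2 // !mulBr_S0 // muls1.
rewrite mulA_S // mul0_BaseUnit // muls1 mul_subr1_S0 //.
rewrite opprB opprB (addrC (mul (mul m y) A)) addrA; congr (_ + _).
rewrite addrA (addrA (_ - m)) subrK.
by rewrite addrACA (addrC (- one)) addrACA addrA.
Qed.

End SRingArithmetic.

Theorem proposition3p2p4 (T : zmodType) (mul : T -> T -> T) (one q01 : T) :
  SRing mul one q01 ->
  forall m s : T, Sa mul 0 m ->
    (exists x y : T, Sa mul 0 x /\ Sa mul 0 y /\
        s = x - one + mul y (BaseUnit one q01)) /\
    (forall x y : T, Sa mul 0 x -> Sa mul 0 y ->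
        s = x - one + mul y (BaseUnit one q01) ->
        mul m s = mul m (x - y) + y - one + mul (mul m y) (BaseUnit one q01)).
Proof.
move=> [[_ [mulC [mulDr_wheel [mulA_S [[_ [[q01_1 _] bases]] [S0_0 [S0_1 _]]]]]]] [e unity_e]].
move=> m s m0; split.
  exact: (S0_coordinates mulDr_wheel mulC mulA_S S0_0 S0_1 unity_e).
move=> x y _ y0 ->.
exact: (mul_S0_coordinates mulDr_wheel mulC mulA_S S0_0 S0_1 unity_e x q01_1).
Qed.
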